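(* For every integer $m \geq 3$, $\gamma_{b,2}(P_m \square C_4) = 4\left\lfloor \frac{m}{6} \right\rfloor + c$, where $c \in \{0,1\}$ if $m \equiv 0 \pmod 6$; $c = 2$ if $m \equiv 1$ or $2 \pmod 6$; $c = 3$ if $m \equiv 3 \pmod 6$; $c \in \{3,4\}$ if $m \equiv 4 \pmod 6$; and $c = 4$ if $m \equiv 5 \pmod 6$.
   Context: For a graph $G$, a $2$-limited broadcast is a function $f: V(G) \to \{0,1,2\}$. A vertex $u$ hears the broadcast from $v$ if $f(v) > 0$ and $d(u,v) \leq f(v)$, where $d$ is the distance in $G$. The broadcast $f$ is dominating if every vertex of $G$ hears the broadcast from some vertex. The cost of $f$ is $\sum_{v \in V(G)} f(v)$. The $2$-limited broadcast domination number $\gamma_{b,2}(G)$ is the minimum cost of a $2$-limited dominating broadcast on $G$. $C_n$ denotes the cycle on $n$ vertices, $P_m$ the path on $m$ vertices, and $\square$ the Cartesian product of graphs. *)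

From mathcomp Require Import all_boot.
Set Implicit Arguments. Unset Strict Implicit. Unset Printing Implicit Defensive.

(* within e k u v  <=>  there is a walk of length <= k from u to v,
   i.e. the graph distance d(u,v) is at most k. *)
Fixpoint within (T : finType) (e : rel T) (k : nat) (u v : T) : bool :=
  match k with
  | 0 => u == v
  | k'.+1 => within e k' u v || [exists w, within e k' u w && e w v]
  end.

Definition path_graph (m : nat) : rel 'I_m :=
  fun i j => (i.+1 == j :> nat) || (j.+1 == i :> nat).

Definition cycle_graph (n : nat) : rel 'I_n :=
  fun i j => (i.+1 %% n == j :> nat) || (j.+1 %% n == i :> nat).

Definition cart_prod (T1 T2 : finType) (e1 : rel T1) (e2 : rel T2)
  : rel (T1 * T2) :=
  fun u v => ((u.1 == v.1) && e2 u.2 v.2) || (e1 u.1 v.1 && (u.2 == v.2)).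

Definition broadcast2 (T : finType) := {ffun T -> 'I_3}.

Definition hears (T : finType) (e : rel T) (f : broadcast2 T) (u v : T) : bool :=
  (0 < f v) && within e (f v) v u.

Definition dominating2 (T : finType) (e : rel T) (f : broadcast2 T) : bool :=
  [forall u, [exists v, hears e f u v]].

Definition cost2 (T : finType) (f : broadcast2 T) : nat := \sum_(v : T) (f v : nat).

(* gamma_{b,2}(G): minimum cost of a dominating 2-limited broadcast.
   The neutral element #|T| is harmless: the constant-1 broadcast is
   dominating and has cost #|T|. *)
Definition gamma_b2 (T : finType) (e : rel T) : nat :=
  \big[minn/#|T|]_(f : broadcast2 T | dominating2 e f) cost2 f.

Arguments path_graph m : clear implicits.
Arguments cycle_graph n : clear implicits.

(* Give each vertex of column x of P_m x C_4
   the weight col_weight m x: 9, plus 4 in the two end columns, minus 1 in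
   columns 2 and m - 3.  A ball of radius k <= 2 then weighs at most 54 k:
   an interior ball of radius 2 has 12 vertices, and near an end the extra
   weight of the end column is paid for by the part of the ball cut off by
   the end.  As the total weight is 4 (9 m + 6), a dominating broadcast costs
   at least (36 m + 24) / 54.
   Upper bound: transmitters of power 2 at (x, 0) for x = 2 (mod 6) and at
   (x, 2) for x = 5 (mod 6), and of power 1 at (0, 2), at (m - 1, 0) if
   m = 1, 2 (mod 6) and at (m - 1, 2) if m = 4, 5 (mod 6).  Its cost is the
   ceiling of (6 m + 4) / 9, so the two bounds meet. *)

From mathcomp Require Import all_boot all_order zify.
Import Order.TTheory.
Set Implicit Arguments. Unset Strict Implicit. Unset Printing Implicit Defensive.

Section Within.
Variables (T : finType) (e : rel T).

Lemma within_step k u w v : within e k u w -> e w v -> within e k.+1 u v.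
Proof.
by move=> huw hwv /=; apply/orP; right; apply/existsP; exists w; rewrite huw.
Qed.

Lemma within_S k u v : within e k u v -> within e k.+1 u v.
Proof. by move=> /= ->. Qed.

Lemma within_leq k k' u v : k <= k' -> within e k u v -> within e k' u v.
Proof. by move=> /subnK <-; elim: (k' - k) => // n IH /IH /within_S. Qed.

Lemma within_refl k u : within e k u u.
Proof. by apply: (@within_leq 0) => /=. Qed.

Lemma within_trans k1 k2 u w v :
  within e k1 u w -> within e k2 w v -> within e (k1 + k2) u v.
Proof.
move=> huw; elim: k2 v => [|k IH] v /=; first by move/eqP <-; rewrite addn0.
rewrite addnS; case/orP => [/IH/within_S //|/existsP [z /andP [/IH hz]]].
exact: within_step.
Qed.

End Within.

Lemma within_hom (T T' : finType) (e : rel T) (e' : rel T') (g : T -> T') k u v :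
  (forall x y, e x y -> e' (g x) (g y)) -> within e k u v -> within e' k (g u) (g v).
Proof.
move=> hg; elim: k v => [|k IH] v /=; first by move/eqP ->.
by case/orP => [/IH -> //|/existsP [w /andP [/IH hw /hg]]]; apply: within_step hw.
Qed.

Lemma within_cart_prod (T1 T2 : finType) (e1 : rel T1) (e2 : rel T2) k a b x y :
  within (cart_prod e1 e2) k (a, b) (x, y) <->
  exists k1 k2, [/\ k1 + k2 <= k, within e1 k1 a x & within e2 k2 b y].
Proof.
split.
  elim: k x y => [|k IH] x y /=.
    by move/eqP => [<- <-]; exists 0, 0; split=> //; apply: within_refl.
  case/orP => [/IH [k1 [k2 [hk h1 h2]]]|/existsP [[wx wy]]].
    by exists k1, k2; split; rewrite ?(leq_trans hk).
  case/andP => /IH [k1 [k2 [hk h1 h2]]].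
  rewrite /cart_prod /= => /orP [/andP [/eqP <- he]|/andP [he /eqP <-]].
    by exists k1, k2.+1; split; [rewrite addnS ltnS | | exact: within_step he].
  by exists k1.+1, k2; split; [rewrite addSn ltnS | exact: within_step he |].
case=> k1 [k2 [hk h1 h2]]; apply: within_leq hk _.
apply: (within_trans (w := (x, b))).
  apply: (within_hom (g := fun t => (t, b))) h1 => t t' he.
  by rewrite /cart_prod /= he eqxx orbT.
apply: (within_hom (g := fun t => (x, t))) h2 => t t' he.
by rewrite /cart_prod /= he eqxx.
Qed.

Definition path_dist (a b : nat) := (a - b) + (b - a).

Lemma within_path_graph m k (a x : 'I_m) :
  within (path_graph m) k a x = (path_dist a x <= k).
Proof.
apply/idP/idP.
  elim: k x => [|k IH] x /=; first by move/eqP <-; rewrite /path_dist subnn.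
  by case/orP => [/IH|/existsP [w /andP [/IH]]]; rewrite /path_graph /path_dist; lia.
elim: k x => [|k IH] x hd /=.
  by apply/eqP/ord_inj; move: hd; rewrite /path_dist; lia.
have [/IH/within_S //|hk] := leqP (path_dist a x) k.
have hx' : (if x < a then x.+1 else x.-1) < m.
  by have := ltn_ord a; have := ltn_ord x; case: ifP; lia.
apply: (within_step (w := Ordinal hx')).
  by apply: IH; move: hd hk; rewrite /path_dist /=; case: ifP; lia.
by move: hk; rewrite /path_graph /path_dist /=; case: ifP; lia.
Qed.

Definition cycle4_dist (b y : nat) := (b != y) + ((b + 2) %% 4 == y).

Lemma within_cycle4 k (b y : 'I_4) :
  within (cycle_graph 4) k b y = (cycle4_dist b y <= k).
Proof.
have hb := ltn_ord b; have hy := ltn_ord y.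
apply/idP/idP.
  elim: k y hy => [|k IH] y hy /=; first by move/eqP <-; rewrite /cycle4_dist eqxx; lia.
  case/orP => [/IH|/existsP [w /andP [/IH]]]; first by move/(_ hy); lia.
  by have hw := ltn_ord w; move/(_ hw); rewrite /cycle_graph /cycle4_dist; lia.
move=> hd; apply: within_leq hd _.
have [<-|hby] := eqVneq b y; first exact: within_refl.
have hw : (b + 1) %% 4 < 4 by rewrite ltn_mod.
have [opp|nopp] := eqVneq ((b + 2) %% 4) y.
  rewrite /cycle4_dist hby opp eqxx.
  apply: (within_step (w := Ordinal hw)); last by rewrite /cycle_graph /=; lia.
  by apply: (within_step (within_refl _ 0 b)); rewrite /cycle_graph /=; lia.
rewrite /cycle4_dist hby (negbTE nopp).
apply: (within_step (within_refl _ 0 b)).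
by move: hby; rewrite -val_eqE /cycle_graph /=; lia.
Qed.

Local Notation cyl m := (cart_prod (path_graph m) (cycle_graph 4)).

Lemma within_cyl m k (v u : 'I_m * 'I_4) :
  within (cyl m) k v u = (path_dist v.1 u.1 + cycle4_dist v.2 u.2 <= k).
Proof.
case: v u => a b [x y]; apply/idP/idP.
  case/within_cart_prod => k1 [k2 [hk]].
  rewrite within_path_graph within_cycle4 => h1 h2.
  exact: leq_trans (leq_add h1 h2) hk.
move=> hd; apply/within_cart_prod; exists (path_dist a x), (cycle4_dist b y).
by rewrite within_path_graph within_cycle4.
Qed.

Lemma gamma_b2_le_cost (T : finType) (e : rel T) (f : broadcast2 T) :
  dominating2 e f -> gamma_b2 e <= cost2 f.
Proof. by move=> domf; rewrite /gamma_b2 -minEnat -leEnat; apply: bigmin_le_cond. Qed.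

Section WeightBound.
Variables (T : finType) (e : rel T) (w : T -> nat) (B : nat).
Hypothesis ball_weight :
  forall v k, 0 < k <= 2 -> \sum_(u | within e k v u) w u <= k * B.

Lemma total_weight_le_cost (f : broadcast2 T) :
  dominating2 e f -> \sum_u w u <= B * cost2 f.
Proof.
move=> /forallP domf.
apply: (@leq_trans (\sum_u \sum_v hears e f u v * w u)).
  apply: leq_sum => u _; have /existsP [v huv] := domf u.
  by rewrite (bigD1 v) //= huv mul1n leq_addr.
rewrite exchange_big /cost2 big_distrr /=; apply: leq_sum => v _.
have [fv0|fv_gt0] := posnP (f v).
  by rewrite big1 // => u _; rewrite /hears fv0.
rewrite (eq_bigr (fun u => if within e (f v) v u then w u else 0)); last first.
  by move=> u _; rewrite /hears fv_gt0; case: ifP; rewrite ?mul1n ?mul0n.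
rewrite -big_mkcond mulnC; apply: ball_weight.
by have := ltn_ord (f v); lia.
Qed.

Lemma total_weight_le_gamma_b2 : \sum_u w u <= B * gamma_b2 e.
Proof.
apply: (big_ind (fun g => \sum_u w u <= B * g)) => [|x y hx hy|f].
- apply: (@leq_trans (\sum_(u : T) B)).
    apply: leq_sum => u _; rewrite -[B]mul1n.
    apply: leq_trans (@ball_weight u 1 _) => //.
    by rewrite (bigD1 u) ?leq_addr ?within_refl.
  by rewrite sum_nat_const mulnC.
- by rewrite minnMr leq_min hx hy.
- exact: total_weight_le_cost.
Qed.
End WeightBound.

Definition ball_profile k d := (d <= k) + 2 * (d.+1 <= k) + (d.+2 <= k).

Definition ball_tail k d := ball_profile k d.+1 + ball_profile k d.+2.

Lemma sum_cycle4_dist_le (j : 'I_4) k d :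
  \sum_(y < 4) (d + cycle4_dist j y <= k) = ball_profile k d.
Proof.
rewrite !big_ord_recr big_ord0 /ball_profile /cycle4_dist /=.
by case: j => [[|[|[|[|j]]]] hj] //=; lia.
Qed.

Definition ball_mass k := ball_profile k 0 + 2 * ball_tail k 0.

Lemma ball_tail_pred k d : k <= 2 -> 0 < d ->
  ball_tail k d.-1 = ball_profile k d + ball_tail k d.
Proof. by rewrite /ball_tail /ball_profile; lia. Qed.

Lemma sum_ball_profile_left m i k : m <= i -> k <= 2 ->
  \sum_(x < m) ball_profile k (path_dist i x) + ball_tail k i = ball_tail k (i - m).
Proof.
move=> + hk; elim: m => [|m IH] hm; first by rewrite big_ord0 subn0.
have dist_im : path_dist i m = i - m by rewrite /path_dist; lia.
rewrite big_ord_recr /= addnAC IH 1?ltnW // dist_im subnS ball_tail_pred ?subn_gt0 //.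
by rewrite addnC.
Qed.

Lemma sum_ball_profile m i k : i < m -> k <= 2 ->
  \sum_(x < m) ball_profile k (path_dist i x) + ball_tail k i
    + ball_tail k (m - 1 - i) = ball_mass k.
Proof.
move=> + hk; elim: m => [//|m IH]; rewrite ltnS leq_eqVlt => /orP [/eqP <-|hi].
  have := sum_ball_profile_left (leqnn i) hk; rewrite subnn big_ord_recr /=.
  have -> : path_dist i i = 0 by rewrite /path_dist subnn.
  have -> : i.+1 - 1 - i = 0 by lia.
  by rewrite /ball_mass; lia.
have dist_mi : path_dist i m = m - i by rewrite /path_dist; lia.
have -> : m.+1 - 1 - i = m - i by lia.
rewrite (_ : m - 1 - i = (m - i).-1) in IH; last by lia.
move: (IH hi); rewrite big_ord_recr /= dist_mi ball_tail_pred ?subn_gt0 //; lia.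
Qed.

(* Each end may use half of the slack 54 k - 9 (ball_mass k), which is 9 for
   k = 1 and 0 for k = 2. *)
Lemma ball_end_excess k d : 0 < k <= 2 ->
  2 * (4 * ball_profile k d - ball_profile k (path_dist d 2))
    <= 18 * ball_tail k d + (54 * k - 9 * ball_mass k).
Proof.
case/andP; case: k => [|[|[|k]]] // _ _;
  by rewrite /ball_mass /ball_tail /ball_profile /path_dist; lia.
Qed.

Definition col_weight m x :=
  9 + 4 * (x == 0) + 4 * (x.+1 == m) - (x == 2) - (x.+3 == m).

Lemma sum_ord_eq_mul m a (h : nat -> nat) :
  \sum_(x < m) (x == a :> nat) * h x = (a < m) * h a.
Proof.
elim: m => [|m IH]; first by rewrite big_ord0.
rewrite big_ord_recr /= IH.
by case: (ltngtP a m) => [lt|gt|<-]; rewrite ?eqxx; nia.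
Qed.

Lemma sum_mul_col_weight m (h : nat -> nat) : 3 <= m ->
  \sum_(x < m) h x * col_weight m x + h 2 + h (m - 3) =
  9 * \sum_(x < m) h x + 4 * h 0 + 4 * h (m - 1).
Proof.
move=> hm.
have : \sum_(x < m) (h x * col_weight m x + (x == 2 :> nat) * h x
                      + (x == m - 3 :> nat) * h x) =
        \sum_(x < m) (9 * h x + 4 * ((x == 0 :> nat) * h x)
                      + 4 * ((x == m - 1 :> nat) * h x)).
  by apply: eq_bigr => x _; have := ltn_ord x; rewrite /col_weight; nia.
rewrite !big_split /= !big1_eq !sum_ord_eq_mul.
have [-> -> -> ->] : [/\ 0 < m, 2 < m, m - 3 < m & m - 1 < m] by split; lia.
by rewrite !mul1n; lia.
Qed.

Lemma sum_col_weight m : 3 <= m -> \sum_(x < m) col_weight m x = 9 * m + 6.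
Proof.
move=> hm; have := sum_mul_col_weight (fun _ => 1) hm.
under eq_bigr => x _ do rewrite mul1n.
rewrite sum_nat_const card_ord -!addnA => /(congr1 (subn^~ 2)).
by rewrite addnK => ->; lia.
Qed.

Lemma sum_cyl_col_weight m : 3 <= m ->
  \sum_(u : 'I_m * 'I_4) col_weight m u.1 = 4 * (9 * m + 6).
Proof.
move=> hm; rewrite -(pair_bigA _ (fun (x : 'I_m) (_ : 'I_4) => col_weight m x)) /=.
under eq_bigr => x _ do rewrite sum_nat_const card_ord.
by rewrite -big_distrr /= sum_col_weight.
Qed.

Lemma cyl_ball_weight m (v : 'I_m * 'I_4) k : 3 <= m -> 0 < k <= 2 ->
  \sum_(u | within (cyl m) k v u) col_weight m u.1 <= k * 54.
Proof.
case: v => i j hm hk; have hi := ltn_ord i; have /andP [_ k_le2] := hk.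
pose h x := ball_profile k (path_dist i x).
have -> : \sum_(u | within (cyl m) k (i, j) u) col_weight m u.1 =
          \sum_(x < m) h x * col_weight m x.
  rewrite big_mkcond; under eq_bigr => u _ do rewrite within_cyl /=.
  rewrite -(pair_bigA _ (fun (x : 'I_m) (y : 'I_4) =>
    if path_dist i x + cycle4_dist j y <= k then col_weight m x else 0)) /=.
  apply: eq_bigr => x _; rewrite /h -(sum_cycle4_dist_le j) big_distrl /=.
  by apply: eq_bigr => y _; case: ifP; rewrite ?mul1n ?mul0n.
have := sum_mul_col_weight h hm; rewrite /h.
have -> : path_dist i 0 = i by rewrite /path_dist; lia.
have -> : path_dist i (m - 1) = m - 1 - i by rewrite /path_dist; lia.
have -> : path_dist i (m - 3) = path_dist (m - 1 - i) 2 by rewrite /path_dist; lia.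
have := sum_ball_profile hi k_le2.
have := ball_end_excess i hk; have := ball_end_excess (m - 1 - i) hk.
have : 9 * ball_mass k <= 54 * k.
  by move: hk; rewrite /ball_mass /ball_tail /ball_profile; lia.
lia.
Qed.

Definition end_row m := 2 * (3 <= m %% 6).
Definition has_end_transmitter m := (m %% 6 != 0) && (m %% 6 != 3).

Definition cyl_power m x y : nat :=
  2 * ((x %% 6 == 2) && (y == 0)) + 2 * ((x %% 6 == 5) && (y == 2))
  + ((x == 0) && (y == 2)) + [&& x.+1 == m, y == end_row m & has_end_transmitter m].

Lemma cyl_power_row0 m q : cyl_power m (q * 6 + 2) 0 = 2.
Proof. by rewrite /cyl_power /has_end_transmitter; lia. Qed.

Lemma cyl_power_row2 m q : cyl_power m (q * 6 + 5) 2 = 2.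
Proof. by rewrite /cyl_power /has_end_transmitter; lia. Qed.

Lemma cyl_power_corner m : 0 < cyl_power m 0 2.
Proof. by rewrite /cyl_power; lia. Qed.

Lemma cyl_power_end m : 0 < m -> has_end_transmitter m ->
  0 < cyl_power m (m - 1) (end_row m).
Proof. by rewrite /cyl_power; lia. Qed.

Definition cyl_covered m x y := exists a b,
  [/\ a < m, b < 4, 0 < cyl_power m a b &
      path_dist a x + cycle4_dist b y <= cyl_power m a b].

Lemma cyl_power_covers m x y : 3 <= m -> x < m -> y < 4 -> cyl_covered m x y.
Proof.
have [q [r [-> hr]]] : exists q r, x = q * 6 + r /\ r < 6.
  by exists (x %/ 6), (x %% 6); rewrite -divn_eq ltn_mod.
move=> hm hx hy.
have left_cover : r + cycle4_dist 2 y <= 1 -> cyl_covered m (q * 6 + r) y.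
  case: q hx => [|q] hx hd.
    have hP := cyl_power_corner m.
    by exists 0, 2; split=> //; rewrite /path_dist; lia.
  by exists (q * 6 + 5), 2; rewrite cyl_power_row2 /path_dist; split; lia.
have end_cover b : has_end_transmitter m -> b = end_row m ->
    path_dist (m - 1) (q * 6 + r) + cycle4_dist b y <= 1 ->
    cyl_covered m (q * 6 + r) y.
  move=> ht -> hd; have hP := cyl_power_end (ltnW (ltnW hm)) ht.
  exists (m - 1), (end_row m).
  by split=> //; [lia | rewrite /end_row; lia | exact: leq_trans hd hP].
(* (6 q + r, y) hears one of (6 q + 2, 0), (6 q + 5, 2) and (6 q - 1, 2), or
   the transmitter at (0, 2) or in the last column standing in for it. *)
rewrite /cyl_covered /path_dist /cycle4_dist /end_row /has_end_transmitter
  in end_cover left_cover *.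
have [y0|[y2|y13]] : y = 0 \/ y = 2 \/ y = 1 \/ y = 3 by lia.
- have [r5|r5] := eqVneq r 5.
    by exists (q * 6 + 5), 2; rewrite cyl_power_row2; split; lia.
  have [fits|clamp] := ltnP (q * 6 + 2) m.
    by exists (q * 6 + 2), 0; rewrite cyl_power_row0; split; lia.
  by apply: (end_cover 0); lia.
- have [r01|r345|r2] := ltngtP r 2.
  + by apply: left_cover; lia.
  + have [fits|clamp] := ltnP (q * 6 + 5) m.
      by exists (q * 6 + 5), 2; rewrite cyl_power_row2; split; lia.
    by apply: (end_cover 2); lia.
  + by exists (q * 6 + 2), 0; rewrite cyl_power_row0; split; lia.
- have [r0|[r123|r45]] : r = 0 \/ 0 < r < 4 \/ 4 <= r by lia.
  + by apply: left_cover; lia.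
  + have [fits|clamp] := ltnP (q * 6 + 2) m.
      by exists (q * 6 + 2), 0; rewrite cyl_power_row0; split; lia.
    by apply: (end_cover 0); lia.
  + have [fits|clamp] := ltnP (q * 6 + 5) m.
      by exists (q * 6 + 5), 2; rewrite cyl_power_row2; split; lia.
    by apply: (end_cover 2); lia.
Qed.

Lemma cyl_power_le2 m x y : cyl_power m x y <= 2.
Proof. by rewrite /cyl_power /end_row /has_end_transmitter; lia. Qed.

Definition cyl_bcast m : broadcast2 ('I_m * 'I_4)%type :=
  [ffun u : 'I_m * 'I_4 => inord (cyl_power m u.1 u.2)].

Lemma cyl_bcastE m u : cyl_bcast m u = cyl_power m u.1 u.2 :> nat.
Proof. by rewrite ffunE inordK // ltnS cyl_power_le2. Qed.

Lemma cyl_bcast_dominating m : 3 <= m -> dominating2 (cyl m) (cyl_bcast m).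
Proof.
move=> hm; apply/forallP => -[x y]; apply/existsP.
have [a [b [ha hb hpos hd]]] := cyl_power_covers hm (ltn_ord x) (ltn_ord y).
by exists (Ordinal ha, Ordinal hb); rewrite /hears within_cyl cyl_bcastE hpos.
Qed.

Lemma sum_mod6_eq m a : a < 6 -> \sum_(x < m) (x %% 6 == a) = (m + 5 - a) %/ 6.
Proof.
move=> ha; elim: m => [|m IH]; first by rewrite big_ord0; lia.
by rewrite big_ord_recr /= IH; lia.
Qed.

Lemma sum_cyl_power_col m x : 0 < m -> \sum_(y < 4) cyl_power m x y =
  2 * (x %% 6 == 2) + 2 * (x %% 6 == 5) + (x == 0) * 1
  + (x == m.-1) * has_end_transmitter m.
Proof.
rewrite !big_ord_recr big_ord0 /cyl_power /end_row /=.
by case: (2 < m %% 6); case: has_end_transmitter; rewrite /= ?andbT ?andbF; lia.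
Qed.

Lemma cost_cyl_bcast m : 3 <= m ->
  cost2 (cyl_bcast m) = 2 * ((m + 3) %/ 6) + 2 * (m %/ 6) + 1 + has_end_transmitter m.
Proof.
move=> hm; rewrite /cost2; under eq_bigr => u _ do rewrite cyl_bcastE.
rewrite -(pair_bigA _ (fun (x : 'I_m) (y : 'I_4) => cyl_power m x y)) /=.
have m_gt0 : 0 < m by lia.
under eq_bigr => x _ do rewrite (sum_cyl_power_col _ m_gt0).
rewrite !big_split /= !big1_eq !sum_mod6_eq // (sum_ord_eq_mul m 0 (fun _ => 1)).
by rewrite (sum_ord_eq_mul m m.-1 (fun _ => has_end_transmitter m)); lia.
Qed.

Lemma gamma_b2_cyl m : 3 <= m -> gamma_b2 (cyl m) = (6 * m + 12) %/ 9.
Proof.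
move=> hm.
have lower := total_weight_le_gamma_b2 (fun v k => @cyl_ball_weight m v k hm).
rewrite sum_cyl_col_weight // in lower.
have upper := gamma_b2_le_cost (cyl_bcast_dominating hm).
rewrite cost_cyl_bcast // /has_end_transmitter in upper.
lia.
Qed.

Theorem corollary4p4 (m : nat) (hm : 3 <= m) :
  exists c : nat,
    gamma_b2 (cart_prod (path_graph m) (cycle_graph 4)) = 4 * (m %/ 6) + c /\
    (m %% 6 = 0 -> c = 0 \/ c = 1) /\
    (m %% 6 = 1 \/ m %% 6 = 2 -> c = 2) /\
    (m %% 6 = 3 -> c = 3) /\
    (m %% 6 = 4 -> c = 3 \/ c = 4) /\
    (m %% 6 = 5 -> c = 4).
Proof.
rewrite gamma_b2_cyl //; exists ((6 * m + 12) %/ 9 - 4 * (m %/ 6)); lia.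
Qed.
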